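(* Let $\mathscr{a}\in\mathbb{R}$, $\mathscr{b}\in(\mathscr{a},\infty)$, for $\theta=(\theta_1,\theta_2,\theta_3,\theta_4)\in\mathbb{R}^4$ and $x\in\mathbb{R}$ let $\mathscr{N}^\theta(x)=\theta_3\max\{\theta_1x+\theta_2,0\}+\theta_4$ and $I^\theta=\{x\in[\mathscr{a},\mathscr{b}]\colon\theta_1x+\theta_2>0\}$, let $\lambda$ be the Lebesgue–Borel measure on $\mathbb{R}$, and let $(\theta_n)_{n\in\mathbb{N}}\subseteq\mathbb{R}^4$, $\theta_n=(\theta_{n,1},\theta_{n,2},\theta_{n,3},\theta_{n,4})$, and $h\in C([\mathscr{a},\mathscr{b}],\mathbb{R})$ satisfy $\lim_{n\to\infty}\sup_{x\in[\mathscr{a},\mathscr{b}]}|\mathscr{N}^{\theta_n}(x)-h(x)|=0$, where $h$ is not constant. Then there exists $\vartheta=(\vartheta_1,\dots,\vartheta_4)\in\mathbb{R}^4$ such that $\mathscr{N}^\vartheta|_{[\mathscr{a},\mathscr{b}]}=h$, $\lim_{n\to\infty}|\theta_{n,1}\theta_{n,3}-\vartheta_1\vartheta_3|=0$, and $\lim_{n\to\infty}\lambda(I^{\theta_n}\,\Delta\,I^\vartheta)=0$.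
   Context: $A\,\Delta\,B$ denotes the symmetric difference of sets. *)

From HB Require Import structures.
From mathcomp Require Import all_boot all_order all_algebra.
From mathcomp Require Import all_classical all_reals all_analysis.
Set Implicit Arguments. Unset Strict Implicit. Unset Printing Implicit Defensive.
Import Order.TTheory GRing.Theory Num.Theory.
Import numFieldNormedType.Exports.
Local Open Scope classical_set_scope.
Local Open Scope ring_scope.

Definition param (R : realType) := (R * R * R * R)%type.

Definition th1 {R : realType} (t : param R) : R := t.1.1.1.
Definition th2 {R : realType} (t : param R) : R := t.1.1.2.
Definition th3 {R : realType} (t : param R) : R := t.1.2.
Definition th4 {R : realType} (t : param R) : R := t.2.

Definition realization {R : realType} (t : param R) (x : R) : R :=
  th3 t * Num.max (th1 t * x + th2 t) 0 + th4 t.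

Definition active_set {R : realType} (a b : R) (t : param R) : set R :=
  [set x | x \in `[a, b] /\ 0 < th1 t * x + th2 t].

From HB Require Import structures.
From mathcomp Require Import all_boot all_order all_algebra.
From mathcomp Require Import all_classical all_reals all_analysis.
From mathcomp Require Import ring lra measurable_realfun.
Import Order.TTheory GRing.Theory Num.Theory.
Import numFieldNormedType.Exports.
Local Open Scope classical_set_scope.
Local Open Scope ring_scope.

(* Every approximant N^t with t1 >= 0 is constant left of its kink and affine
   right of it; if t1 < 0 the same holds after the reflection x |-> a + b - x.
   Being approximable in one orientation is monotone in the tolerance, so one
   orientation works for all tolerances, say the first.  Then h is affine on
   [y, b] whenever h y <> h a, and continuity at T = inf {y | h y <> h a}
   glues the constant and affine pieces: h x = S max(x - T, 0) + h a, which
   is a realization N^v.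
   The slope v1 v3 is nonzero since h is not constant.  If N^t is uniformly
   d-close to h and x is at distance >= e from a, b and the kink of v, then
   N^t and N^v have the same activity at x once d is small compared with e:
   otherwise, at one of x - e, x + e, one of N^t, h stays flat while the other
   moves by more than 2d.  Hence the symmetric difference of the active sets
   lies in three balls of radius e, and comparing N^t with h at two points
   where both are active gives the convergence of the slopes. *)

Section realization.
Context {R : realType}.
Implicit Types (a b x y : R) (t : param R).

Definition preact t x := th1 t * x + th2 t.
Definition slope t := th1 t * th3 t.

Lemma realization_inactive t x : preact t x <= 0 -> realization t x = th4 t.
Proof. by move=> tx; rewrite /realization max_r // mulr0 add0r. Qed.

Lemma realization_active t x :
  0 <= preact t x -> realization t x = slope t * x + (th3 t * th2 t + th4 t).
Proof. by move=> tx; rewrite /realization max_l // /slope; ring. Qed.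

Lemma realizationB_active t x y : 0 <= preact t x -> 0 <= preact t y ->
  realization t y - realization t x = slope t * (y - x).
Proof. by move=> tx ty; rewrite !realization_active //; ring. Qed.

Lemma maxr0_lipschitz (u u' : R) : `|Num.max u 0 - Num.max u' 0| <= `|u - u'|.
Proof.
have h1 := ler_norm (u - u'); have h2 := ler_norm (u' - u); rewrite distrC in h2.
rewrite ler_norml; apply/andP.
case: (lerP 0 u) => [hu|hu]; rewrite ?(max_l hu) ?(max_r (ltW hu));
by case: (lerP 0 u') => [hu'|hu']; rewrite ?(max_l hu') ?(max_r (ltW hu')); split; lra.
Qed.

Lemma realization_lipschitz t x y :
  `|realization t y - realization t x| <= `|slope t| * `|y - x|.
Proof.
have -> : realization t y - realization t x =
    th3 t * (Num.max (preact t y) 0 - Num.max (preact t x) 0).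
  by rewrite /realization; ring.
rewrite normrM /slope normrM (mulrC `|th1 t|) -mulrA ler_wpM2l //.
apply: le_trans (maxr0_lipschitz _ _) _.
by rewrite -normrM /preact (_ : _ - _ = th1 t * (y - x)) //; ring.
Qed.

Definition reflect_param a b t : param R :=
  (- th1 t, th1 t * (a + b) + th2 t, th3 t, th4 t).

Lemma realization_reflect a b t x :
  realization (reflect_param a b t) x = realization t (a + b - x).
Proof.
by rewrite /realization /th1 /th2 /th3 /th4 /=; congr (_ * Num.max _ _ + _); ring.
Qed.

End realization.

Section closeness.
Context {R : realType}.
Implicit Types (a b c d e r s u x y : R) (f g h : R -> R).

Definition close_on a b d f g := forall x, x \in `[a, b] -> `|f x - g x| <= d.

Lemma close_on_sym {a b d f g} : close_on a b d f g -> close_on a b d g f.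
Proof. by move=> hfg x /hfg; rewrite distrC. Qed.

Lemma close_onB {a b d f g x y} : close_on a b d f g ->
  x \in `[a, b] -> y \in `[a, b] -> `|g y - g x| <= 2 * d + `|f y - f x|.
Proof.
move=> hfg /hfg hx /hfg hy.
rewrite (_ : g y - g x = (f y - f x) - (f y - g y) + (f x - g x)); last by ring.
have := ler_normD (f y - f x - (f y - g y)) (f x - g x).
have := ler_normB (f y - f x) (f y - g y); lra.
Qed.

Lemma reflect_itv {a b x} : x \in `[a, b] -> a + b - x \in `[a, b].
Proof. by rewrite !in_itv /= => /andP[? ?]; apply/andP; split; lra. Qed.

Lemma exists_near_left {u x r} : u < x -> 0 < r -> exists y, u < y < x /\ `|y - x| < r.
Proof.
move=> ux r0; set m := Num.min r (x - u).
have m0 : 0 < m by rewrite lt_min r0 subr_gt0.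
have [mr mxu] : m <= r /\ m <= x - u by rewrite !ge_min !lexx orbT.
exists (x - m / 2); rewrite (_ : _ - x = - (m / 2)) ?normrN ?gtr0_norm; [|lra|ring].
by split; [apply/andP; split|]; lra.
Qed.

Lemma exists_near_right {u x r} : x < u -> 0 < r -> exists y, x < y < u /\ `|y - x| < r.
Proof.
move=> xu r0; have nxu : - u < - x by rewrite ltrN2.
have [y [/andP[? ?] yx]] := exists_near_left nxu r0.
exists (- y); split; first by apply/andP; split; lra.
by rewrite (_ : - y - x = - (y - - x)) ?normrN //; ring.
Qed.

(* Unlike {within `[a, b], continuous h}, this epsilon-delta form transfers
   trivially along the reflection x |-> a + b - x. *)
Definition eps_delta_continuous a b h := forall x, x \in `[a, b] ->
  forall e, 0 < e -> exists2 d, 0 < d &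
    forall y, y \in `[a, b] -> `|y - x| < d -> `|h y - h x| < e.

Lemma within_continuous_eps_delta {a b h} :
  {within `[a, b], continuous h} -> eps_delta_continuous a b h.
Proof.
move=> /subspace_continuousP hc x xab e e0.
have := hc x; rewrite /= inE => /(_ xab) /cvgrPdist_lt/(_ e e0).
rewrite near_withinE => /nbhs_ballP[d d0 Hd].
exists d => // y yab yx.
by rewrite distrC; apply: Hd; rewrite ?inE // -ball_normE /ball /= distrC.
Qed.

Lemma eps_delta_continuous_reflect {a b h} :
  eps_delta_continuous a b h -> eps_delta_continuous a b (fun x => h (a + b - x)).
Proof.
move=> hc x xab e e0; have [d d0 Hd] := hc _ (reflect_itv xab) e e0.
exists d => // y yab yx; apply: Hd; first exact: reflect_itv.
by rewrite (_ : _ - _ = - (y - x)) ?normrN //; ring.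
Qed.

Lemma eq_of_eps_delta_approach {a b h x} c s : eps_delta_continuous a b h ->
  x \in `[a, b] ->
  (forall r, 0 < r ->
    exists2 y, y \in `[a, b] /\ `|y - x| < r & h y = c + s * (y - x)) ->
  h x = c.
Proof.
move=> hc xab happ; apply/eqP; rewrite -subr_eq0 -normr_le0.
apply/ler_addgt0Pr => e e0; rewrite add0r.
have [d d0 Hd] := hc x xab (e / 2) ltac:(lra).
have s1 : 0 < `|s| + 1 by have := normr_ge0 s; lra.
set r := Num.min d (e / 2 / (`|s| + 1)).
have r0 : 0 < r by rewrite lt_min d0 !divr_gt0.
have sr : (`|s| + 1) * r <= e / 2 by rewrite mulrC -ler_pdivlMr // ge_min lexx orbT.
have [y [yab yx] hy] := happ r r0.
have Hy : `|h y - h x| < e / 2 by apply: Hd yab (lt_le_trans yx _); rewrite ge_min lexx.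
have syx : `|s| * `|y - x| <= `|s| * r by rewrite ler_wpM2l // ltW.
rewrite (_ : h x - c = (h x - h y) + s * (y - x)); last by rewrite hy; ring.
by apply: le_trans (ler_normD _ _) _; rewrite distrC normrM; lra.
Qed.

End closeness.

Section affine_tails.
Context {R : realType}.
Implicit Types (a b c d s x y : R) (h : R -> R) (t : param R).

Definition affine_on y b h :=
  exists s, forall p q, p \in `[y, b] -> q \in `[y, b] -> h q - h p = s * (q - p).

Lemma affine_on_of_approx y b h :
  (forall d, 0 < d -> exists s c, close_on y b d h (fun x => s * x + c)) ->
  affine_on y b h.
Proof.
move=> happ; case: (ltrP y b) => [yb|ba]; last first.
  exists 0 => p q; rewrite !in_itv /= => /andP[? ?] /andP[? ?].
  by rewrite (@le_anti _ _ q p) ?subrr ?mulr0 //; apply/andP; split; lra.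
set S := (h b - h y) / (b - y).
suff hx x : x \in `[y, b] -> h x = h y + S * (x - y).
  by exists S => p q /hx -> /hx ->; ring.
move=> xyb; apply/eqP; rewrite -subr_eq0 -normr_le0; apply/ler_addgt0Pr => e e0.
have [s [c hsc]] := happ (e / 4) ltac:(lra).
have yyb : y \in `[y, b] by rewrite in_itv /= lexx ltW.
have byb : b \in `[y, b] by rewrite in_itv /= lexx ltW.
have := hsc x xyb; have := hsc y yyb; have := hsc b byb.
set ex := h x - _; set ey := h y - _; set eb := h b - _ => heb hey hex.
rewrite (_ : h x - (h y + S * (x - y)) = ex - ey - (eb - ey) * ((x - y) / (b - y)));
  last by rewrite /ex /ey /eb /S; field; rewrite subr_eq0 gt_eqF.
move: (xyb); rewrite in_itv /= => /andP[yx xb].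
have w0 : 0 <= (x - y) / (b - y) by apply: divr_ge0; lra.
have w1 : (x - y) / (b - y) <= 1 by rewrite ler_pdivrMr ?mul1r ?subr_gt0 //; lra.
apply: le_trans (ler_normB _ _) _; rewrite normrM (ger0_norm w0) add0r.
have : `|eb - ey| * ((x - y) / (b - y)) <= `|eb - ey| by rewrite ler_piMr.
by have := ler_normB eb ey; have := ler_normB ex ey; lra.
Qed.

Definition approx_right_relu a b d h :=
  exists2 t, 0 <= th1 t & close_on a b d (realization t) h.

Lemma approx_right_relu_mono a b h d d' :
  d <= d' -> approx_right_relu a b d h -> approx_right_relu a b d' h.
Proof. by move=> dd' [t ? ht]; exists t => // x /ht /le_trans; apply. Qed.

Lemma affine_on_right_tail {a b h} y :
  (forall d, 0 < d -> approx_right_relu a b d h) ->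
  y \in `[a, b] -> h y != h a -> affine_on y b h.
Proof.
move=> happ yab hya; apply: affine_on_of_approx => d d0.
set D := `|h y - h a|; have D0 : 0 < D by rewrite normr_gt0 subr_eq0.
set m := Num.min d (D / 4).
have m0 : 0 < m by rewrite lt_min d0 divr_gt0.
have [md mD] : m <= d /\ m <= D / 4 by rewrite !ge_min !lexx orbT.
have [t th1t ht] := happ m m0.
move: (yab); rewrite in_itv /= => /andP[ay yb].
have aab : a \in `[a, b] by rewrite in_itv /= lexx; lra.
have ty : 0 < preact t y.
  rewrite ltNge; apply/negP => ty.
  have ta : preact t a <= 0 by rewrite /preact in ty *; nra.
  have := ht y yab; have := ht a aab; rewrite !realization_inactive //.
  have := ler_normB (th4 t - h a) (th4 t - h y).
  by rewrite (_ : _ - _ - _ = h y - h a) -/D; [lra | ring].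
exists (slope t), (th3 t * th2 t + th4 t) => x.
rewrite in_itv /= => /andP[yx xb].
have xab : x \in `[a, b] by rewrite in_itv /=; apply/andP; split; lra.
rewrite -realization_active; last by rewrite /preact in ty *; nra.
by rewrite distrC; apply: le_trans (ht x xab) md.
Qed.

End affine_tails.

Section hinge_of_affine_tails.
Context {R : realType} {a b : R} {h : R -> R}.
Hypothesis hc : eps_delta_continuous a b h.
Hypothesis haff : forall y, y \in `[a, b] -> h y != h a -> affine_on y b h.

Let A := [set y | y \in `[a, b] /\ h y != h a].
Hypothesis A_ne : A !=set0.
Let T := inf A.

Let lb_A : lbound A T.
Proof. by apply: ge_inf; exists a => y [] /[!in_itv] /andP[]. Qed.

Let T_itv : T \in `[a, b].
Proof.
have [y1 Ay1] := A_ne; move: (Ay1.1); rewrite !in_itv /= => /andP[_ y1b].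
have aT : a <= T by apply: lb_le_inf => // y [] /[!in_itv] /andP[].
by rewrite aT (le_trans (lb_A _ Ay1) y1b).
Qed.

Let flat_below y : y \in `[a, b] -> y < T -> h y = h a.
Proof.
move=> yab yT; apply/eqP/negPn/negP => hy.
by have := lb_A _ (conj yab hy); rewrite leNgt yT.
Qed.

Let h_T : h T = h a.
Proof.
move: T_itv; rewrite in_itv /= => /andP[aT Tb].
case: (ltrP a T) => [aT'|Ta]; last by rewrite (@le_anti _ _ T a) ?Ta.
apply: (eq_of_eps_delta_approach _ 0 hc T_itv) => r r0.
have [y [/andP[ay yT] yTr]] := exists_near_left aT' r0.
have yab : y \in `[a, b] by rewrite in_itv /= ltW //= ltW // (lt_le_trans yT).
by exists y; rewrite ?flat_below ?mul0r ?addr0.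
Qed.

Let T_lt y : A y -> T < y.
Proof.
move=> [yab hy]; rewrite lt_neqAle (lb_A _ (conj yab hy)) andbT.
by apply: contraNneq hy => <-; rewrite h_T.
Qed.

Let T_lt_b : T < b.
Proof.
have [y1 Ay1] := A_ne; have := T_lt _ Ay1.
by move: Ay1.1; rewrite in_itv /= => /andP[_ y1b] /lt_le_trans; apply.
Qed.

(* All the affine tails [y, b], y in A, share the slope of one of them. *)
Let affine_above : exists S c, forall x, x \in `[a, b] -> T < x -> h x = S * x + c.
Proof.
have [y0 Ay0 y0b] := inf_lt A_ne T_lt_b.
have [S HS] := haff _ Ay0.1 Ay0.2.
exists S, (h y0 - S * y0) => x xab Tx.
have Txy0 : T < Num.min x y0 by rewrite lt_min Tx T_lt.
have [y [yab hy] yxy0] := inf_lt A_ne Txy0.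
have [s Hs] := haff _ yab hy.
move: xab yab; rewrite !in_itv /= => /andP[_ xb] /andP[_ yb].
have [yx yy0] : y < x /\ y < y0 by move: yxy0; rewrite lt_min => /andP[].
have in_y z : y <= z -> z <= b -> z \in `[y, b].
  by move=> ? ?; rewrite in_itv /=; apply/andP.
have sS : s = S.
  have := Hs y0 b (in_y _ (ltW yy0) (ltW y0b)) (in_y _ yb (lexx b)).
  rewrite HS ?in_itv /= ?lexx ?(ltW y0b) // => /esym; apply: mulIf.
  by rewrite subr_eq0 gt_eqF.
by have := Hs y0 x (in_y _ (ltW yy0) (ltW y0b)) (in_y _ (ltW yx) xb); rewrite sS; lra.
Qed.

Lemma hinge_of_nonconst :
  exists S, forall x, x \in `[a, b] -> h x = S * Num.max (x - T) 0 + h a.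
Proof.
have [S [c hSc]] := affine_above.
have hTc : h T = S * T + c.
  apply: (eq_of_eps_delta_approach _ S hc T_itv) => r r0.
  have [y [/andP[Ty yb] yTr]] := exists_near_right T_lt_b r0.
  have yab : y \in `[a, b].
    move: T_itv; rewrite !in_itv /= => /andP[aT _].
    by rewrite (le_trans aT (ltW Ty)) ltW.
  by exists y; rewrite ?hSc //; ring.
exists S => x xab; case: (ltrP T x) => Tx.
  by rewrite max_l ?subr_ge0 ?ltW // hSc // -h_T hTc; ring.
rewrite max_r ?subr_le0 // mulr0 add0r.
case: (ltrP x T) => xT; first exact: flat_below.
by rewrite (@le_anti _ _ x T) ?xT ?Tx // h_T.
Qed.

End hinge_of_affine_tails.

Section exact_parameter.
Context {R : realType}.
Implicit Types (a b d x : R) (h : R -> R) (t : param R).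

Lemma exact_of_approx_right_relu {a b h} : eps_delta_continuous a b h ->
  (forall d, 0 < d -> approx_right_relu a b d h) ->
  exists v, forall x, x \in `[a, b] -> realization v x = h x.
Proof.
move=> hc happ; have haff y := affine_on_right_tail y happ.
set A := [set y | y \in `[a, b] /\ h y != h a].
case: (pselect (A !=set0)) => [A_ne|A0].
  have [S hS] := hinge_of_nonconst hc haff A_ne.
  exists (1, - inf A, S, h a) => x xab.
  by rewrite [RHS]hS // /realization /th1 /th2 /th3 /th4 /= mul1r.
exists (0, 0, 0, h a) => x xab; rewrite /realization /th3 /= mul0r add0r.
by apply/esym/eqP/negPn/negP => hx; apply: A0; exists x.
Qed.

Lemma forall_or_of_monotone (P Q : R -> Prop) :
  (forall d d', d <= d' -> P d -> P d') -> (forall d d', d <= d' -> Q d -> Q d') ->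
  (forall d, 0 < d -> P d \/ Q d) ->
  (forall d, 0 < d -> P d) \/ (forall d, 0 < d -> Q d).
Proof.
move=> mP mQ PQ; case: (pselect (forall d, 0 < d -> P d)); first by left.
move=> /existsNP[d0 /not_implyP[d00 nP]]; right => d d_gt0.
have m0 : 0 < Num.min d d0 by rewrite lt_min d_gt0.
have [md md0] : Num.min d d0 <= d /\ Num.min d d0 <= d0 by rewrite !ge_min !lexx orbT.
by case: (PQ _ m0) => [/(mP _ _ md0) //|]; exact: mQ.
Qed.

Lemma exact_param_of_approx {a b h} : eps_delta_continuous a b h ->
  (forall d, 0 < d -> exists t, close_on a b d (realization t) h) ->
  exists v, forall x, x \in `[a, b] -> realization v x = h x.
Proof.
move=> hc happ; set h' := fun x => h (a + b - x).
suff [happR|happL] : (forall d, 0 < d -> approx_right_relu a b d h) \/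
    (forall d, 0 < d -> approx_right_relu a b d h').
- exact: exact_of_approx_right_relu hc happR.
- have [v hv] := exact_of_approx_right_relu (eps_delta_continuous_reflect hc) happL.
  exists (reflect_param a b v) => x xab.
  by rewrite realization_reflect hv ?reflect_itv // /h' (_ : a + b - _ = x) //; ring.
apply: forall_or_of_monotone; try exact: approx_right_relu_mono.
move=> d d0; have [t ht] := happ d d0.
case: (lerP 0 (th1 t)) => th1t; [by left; exists t | right].
exists (reflect_param a b t); first by rewrite /th1 /= oppr_ge0 ltW.
by move=> x xab; rewrite realization_reflect; apply: ht; exact: reflect_itv.
Qed.

End exact_parameter.

Section activity.
Context {R : realType}.
Implicit Types (a b d e k x z : R) (h : R -> R) (t v : param R).

Lemma exists_neighbor_below t x {e} : 0 <= e ->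
  exists2 z, `|z - x| = e & preact t z <= preact t x.
Proof.
move=> e0; case: (lerP 0 (th1 t)) => th1t; [exists (x - e) | exists (x + e)].
- by rewrite (_ : x - e - x = - e) ?normrN ?ger0_norm //; ring.
- by rewrite /preact; nra.
- by rewrite (_ : x + e - x = e) ?ger0_norm //; ring.
- by rewrite /preact; nra.
Qed.

Lemma exists_neighbor_above t x {e} : 0 <= e ->
  exists2 z, `|z - x| = e & preact t x <= preact t z.
Proof.
move=> e0; have [z zx tz] := exists_neighbor_below t x e0.
exists (2 * x - z); first by rewrite -normrN -zx; congr `|_|; ring.
by move: tz; rewrite /preact; lra.
Qed.

Lemma preact_dist t {x z e} :
  `|z - x| <= e -> `|preact t z - preact t x| <= `|th1 t| * e.
Proof.
move=> zx; rewrite (_ : _ - _ = th1 t * (z - x)) /preact; last by ring.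
by rewrite normrM ler_wpM2l.
Qed.

Lemma itv_of_dist a b e x z :
  a + e <= x -> x <= b - e -> `|z - x| <= e -> z \in `[a, b].
Proof.
move=> axe xbe; rewrite ler_norml in_itv /= => /andP[? ?].
by apply/andP; split; lra.
Qed.

Lemma exists_itv_near {a b k x} : x \in `[a, b] -> 2 * k <= b - a -> 0 <= k ->
  exists c, a + k <= c <= b - k /\ `|c - x| <= k.
Proof.
rewrite in_itv /= => /andP[ax xb] kba k0.
case: (lerP x (a + k)) => xak.
  by exists (a + k); rewrite ler_distlC; split; apply/andP; split; lra.
case: (lerP (b - k) x) => xbk.
  by exists (b - k); rewrite ler_distlC; split; apply/andP; split; lra.
by exists x; rewrite subrr normr0; split => //; apply/andP; split; lra.
Qed.

(* If t were inactive at x, then at a neighbour z = x -+ e where t stays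
   inactive N^t would be flat while h = N^v moves by |slope v| e > 2 d.
   [inactive_of_inactive] is the same argument with h and N^t swapped. *)
Lemma active_of_active {a b d e x h v t} :
  (forall x, x \in `[a, b] -> realization v x = h x) ->
  close_on a b d (realization t) h -> 0 < e -> 2 * d < `|slope v| * e ->
  a + e <= x -> x <= b - e -> `|th1 v| * e <= preact v x -> 0 < preact t x.
Proof.
move=> hv ht e0 dv axe xbe vx; rewrite ltNge; apply/negP => tx.
have [z zx tz] := exists_neighbor_below t x (ltW e0).
have xab : x \in `[a, b] by apply: itv_of_dist axe xbe _; rewrite subrr normr0 ltW.
have zxe : `|z - x| <= e by rewrite zx.
have zab : z \in `[a, b] by apply: itv_of_dist axe xbe zxe.
have vz : 0 <= preact v z.
  by have := preact_dist v zxe; rewrite ler_distl => /andP[]; lra.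
have vx0 : 0 <= preact v x by apply: le_trans vx; rewrite mulr_ge0 // ltW.
have hzx : h z - h x = slope v * (z - x) by rewrite -!hv // realizationB_active.
have gzx : realization t z - realization t x = 0.
  by rewrite !realization_inactive ?subrr // (le_trans tz).
by have := close_onB ht xab zab; rewrite hzx gzx normr0 normrM zx; lra.
Qed.

Lemma inactive_of_inactive {a b d e x h v t} :
  (forall x, x \in `[a, b] -> realization v x = h x) ->
  close_on a b d (realization t) h -> 0 < e -> 2 * d < `|slope t| * e ->
  a + e <= x -> x <= b - e -> preact v x <= - (`|th1 v| * e) -> preact t x <= 0.
Proof.
move=> hv ht e0 dt axe xbe vx; rewrite leNgt; apply/negP => tx.
have [z zx tz] := exists_neighbor_above t x (ltW e0).
have xab : x \in `[a, b] by apply: itv_of_dist axe xbe _; rewrite subrr normr0 ltW.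
have zxe : `|z - x| <= e by rewrite zx.
have zab : z \in `[a, b] by apply: itv_of_dist axe xbe zxe.
have vz : preact v z <= 0.
  by have := preact_dist v zxe; rewrite ler_distl => /andP[]; lra.
have vx0 : preact v x <= 0 by apply: le_trans vx _; rewrite oppr_le0 mulr_ge0 // ltW.
have hzx : h z - h x = 0 by rewrite -!hv // !realization_inactive ?subrr.
have gzx : realization t z - realization t x = slope t * (z - x).
  by rewrite realizationB_active ?ltW // (lt_le_trans tx).
by have := close_onB (close_on_sym ht) xab zab; rewrite hzx gzx normr0 normrM zx; lra.
Qed.

Lemma activity_agree {a b d e x h v t} :
  (forall x, x \in `[a, b] -> realization v x = h x) ->
  close_on a b d (realization t) h -> 0 < e ->
  2 * d < `|slope v| * e -> 2 * d < `|slope t| * e ->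
  a + e <= x -> x <= b - e -> `|th1 v| * e <= `|preact v x| ->
  (0 < preact v x <-> 0 < preact t x).
Proof.
move=> hv ht e0 dv dt axe xbe; case: (ltrP 0 (preact v x)) => vx.
  rewrite (gtr0_norm vx) => vxe; split => // _.
  exact: active_of_active hv ht e0 dv axe xbe vxe.
rewrite (ler0_norm vx) lerNr => vxe; split => // tx.
by have := inactive_of_inactive hv ht e0 dt axe xbe vxe; rewrite leNgt tx.
Qed.

Lemma slope_gt_of_close {a b d e x y h t} : close_on a b d (realization t) h ->
  x \in `[a, b] -> y \in `[a, b] -> 0 < e ->
  2 * d * (e + (b - a)) < `|h y - h x| * e -> 2 * d < `|slope t| * e.
Proof.
move=> ht xab yab e0 dhe; rewrite ltNge; apply/negP => ste.
have yxba : `|y - x| <= b - a.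
  move: xab yab; rewrite !in_itv /= ler_norml => /andP[? ?] /andP[? ?].
  by apply/andP; split; lra.
have hyx : `|h y - h x| <= 2 * d + `|slope t| * (b - a).
  apply: le_trans (close_onB ht xab yab) _; rewrite lerD2l.
  by apply: le_trans (realization_lipschitz t x y) _; rewrite ler_wpM2l.
have : `|h y - h x| * e <= 2 * d * e + 2 * d * (b - a).
  apply: le_trans (ler_wpM2r (ltW e0) hyx) _; rewrite mulrDl lerD2l mulrAC.
  by rewrite ler_wpM2r // subr_ge0; move: xab; rewrite in_itv /= => /andP[? ?]; lra.
lra.
Qed.

Lemma active_set_symdiff_sub {a b e v t} : th1 v != 0 ->
  (forall x, a + e <= x -> x <= b - e -> `|th1 v| * e <= `|preact v x| ->
    (0 < preact v x <-> 0 < preact t x)) ->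
  active_set a b t `+` active_set a b v `<=`
    ball a e `|` ball b e `|` ball (- th2 v / th1 v) e.
Proof.
move=> v0 agree x sx; rewrite -!ball_normE /ball /=.
have [xab disagree] : x \in `[a, b] /\ ~ (0 < preact v x <-> 0 < preact t x).
  case: sx => [[[? tx] nvx]|[[? vx] ntx]]; split => // -[vt tv].
    by apply: nvx; split => //; apply: tv.
  by apply: ntx; split => //; apply: vt.
move: (xab); rewrite in_itv /= => /andP[ax xb].
case: (ltrP x (a + e)) => xae.
  by left; left; rewrite ltr_distlC; apply/andP; split; lra.
case: (ltrP (b - e) x) => xbe.
  by left; right; rewrite ltr_distlC; apply/andP; split; lra.
right; rewrite distrC ltNge; apply/negP => far; apply: disagree; apply: agree => //.
have -> : preact v x = th1 v * (x - - th2 v / th1 v) by rewrite /preact; field.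
by rewrite normrM ler_wpM2l.
Qed.

End activity.

Section measure_and_limits.
Context {R : realType}.
Local Open Scope ereal_scope.

Lemma close_on_near_of_esup_cvg0 {a b : R} {g : nat -> R -> R} {h} :
  (fun n => ereal_sup [set (`|g n x - h x|)%:E | x in `[a, b]]) @ \oo --> 0%E ->
  forall d : R, (0 < d)%R -> \forall n \near \oo, close_on a b d (g n) h.
Proof.
move=> hconv d d0.
have : \forall n \near \oo, ereal_sup [set (`|g n x - h x|)%:E | x in `[a, b]] < d%:E.
  by apply: (hconv [set y | y < d%:E]); apply: open_ereal_lt'; rewrite lte_fin.
apply: filterS => n hn x xab; rewrite -lee_fin; apply: le_trans (ltW hn).
by apply: ereal_sup_ubound; exists x.
Qed.

Lemma cvge0_of_near_le (u : nat -> \bar R) : (forall n, 0 <= u n) ->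
  (forall e : R, (0 < e)%R -> \forall n \near \oo, u n <= e%:E) -> u @ \oo --> 0%E.
Proof.
move=> u0 hle; apply/fine_cvgP; split.
  apply: filterS (hle 1%R ltr01) => n un1.
  by rewrite ge0_fin_numE // (le_lt_trans un1) ?ltry.
apply/cvgrPdist_le => e e0; apply: filterS (hle e e0) => n /=.
rewrite sub0r normrN; case: (u n) (u0 n) => [r| |] //=.
by rewrite !lee_fin => r0 re; rewrite ger0_norm.
Qed.

Lemma measurable_active_set (a b : R) (t : param R) : measurable (active_set a b t).
Proof.
have mf : measurable_fun setT (preact t).
  apply: continuous_measurable_fun => x.
  apply: continuousD; last exact: cst_continuous.
  by apply: continuousM; [exact: cst_continuous | move=> ?; exact: cvg_id].
have -> : active_set a b t = [set` `[a, b]] `&` (preact t @^-1` [set` `]0, +oo[%R]).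
  by apply/seteqP; split => x /=; rewrite !in_itv /= ?andbT.
apply: measurableI; first exact: measurable_itv.
by have := mf measurableT _ (measurable_itv `]0, +oo[%R); rewrite setTI.
Qed.

Lemma lebesgue_measure_le_three_balls {a b c e : R} {Y : set R} :
  measurable Y -> (0 <= e)%R -> Y `<=` ball a e `|` ball b e `|` ball c e ->
  lebesgue_measure Y <= (e *+ 6)%:E.
Proof.
move=> mY e0 HY; have mB (x : R) : measurable (ball x e) by exact: measurable_ball.
have mU : measurable (ball a e `|` ball b e `|` ball c e) by do 2?apply: measurableU.
have := le_measure lebesgue_measure (mem_set mY) (mem_set mU) HY.
move/le_trans; apply.
have := measureU2 lebesgue_measure (measurableU _ _ (mB a) (mB b)) (mB c).
move/le_trans; apply.
have Eb x : lebesgue_measure (ball x e) <= (e *+ 2)%:E by rewrite lebesgue_measure_ball.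
have := measureU2 lebesgue_measure (mB a) (mB b).
move/(leeD2r (lebesgue_measure (ball c e)))/le_trans; apply.
rewrite (_ : (e *+ 6)%:E = (e *+ 2)%:E + (e *+ 2)%:E + (e *+ 2)%:E);
  last by rewrite -!EFinD -!mulrnDr.
by apply: leeD; [apply: leeD|]; exact: Eb.
Qed.

End measure_and_limits.

Section convergence.
Context {R : realType}.
Context {a b : R} {theta : nat -> param R} {h : R -> R} {v : param R}.
Implicit Types (d e x : R).
Hypothesis hab : a < b.
Hypothesis hv : forall x, x \in `[a, b] -> realization v x = h x.
Hypothesis hu :
  forall d, 0 < d -> \forall n \near \oo, close_on a b d (realization (theta n)) h.
Hypothesis hnc : exists x y, x \in `[a, b] /\ y \in `[a, b] /\ h x != h y.

Lemma slope_neq0 : slope v != 0.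
Proof.
have [x [y [xab [yab hxy]]]] := hnc; apply: contra hxy => /eqP s0.
have := realization_lipschitz v y x.
by rewrite s0 normr0 mul0r normr_le0 subr_eq0 !hv.
Qed.

Lemma th1_neq0 : th1 v != 0.
Proof. by move: slope_neq0; rewrite mulf_eq0 negb_or => /andP[]. Qed.

Lemma exists_active_point : exists2 x, x \in `[a, b] & 0 < preact v x.
Proof.
have [x [y [xab [yab hxy]]]] := hnc.
case: (pselect (exists2 x, x \in `[a, b] & 0 < preact v x)) => // none.
have flat z : z \in `[a, b] -> h z = th4 v.
  move=> zab; rewrite -hv // realization_inactive // leNgt; apply/negP => vz.
  by apply: none; exists z.
by move: hxy; rewrite !flat ?eqxx.
Qed.

Lemma activity_agree_near e : 0 < e -> \forall n \near \oo, forall x,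
  a + e <= x -> x <= b - e -> `|th1 v| * e <= `|preact v x| ->
  (0 < preact v x <-> 0 < preact (theta n) x).
Proof.
move=> e0; have [x0 [y0 [x0ab [y0ab hxy]]]] := hnc.
have D0 : 0 < `|h y0 - h x0| by rewrite normr_gt0 subr_eq0 eq_sym.
have eba : 0 < e + (b - a) by rewrite addr_gt0 // subr_gt0.
near (0:R)^'+ => d.
have d0 : 0 < d by near: d; exact: nbhs_right_gt.
have dv : 2 * d < `|slope v| * e.
  suff : d < `|slope v| * e / 2 by rewrite ltr_pdivlMr // mulrC.
  by near: d; apply: nbhs_right_lt; rewrite !mulr_gt0 ?normr_gt0 ?slope_neq0.
have dD : 2 * d * (e + (b - a)) < `|h y0 - h x0| * e.
  suff : d < `|h y0 - h x0| * e / (2 * (e + (b - a))).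
    by rewrite ltr_pdivlMr ?mulr_gt0 //; lra.
  by near: d; apply: nbhs_right_lt; rewrite !mulr_gt0 ?invr_gt0 ?mulr_gt0.
apply: filterS (hu _ d0) => n ht x axe xbe.
exact: activity_agree hv ht e0 dv (slope_gt_of_close ht x0ab y0ab e0 dD) axe xbe.
Unshelve. all: by end_near.
Qed.

Lemma exists_active_pair : exists2 e, 0 < e & exists p q,
  [/\ a + e <= p, p < q, q <= b - e,
       `|th1 v| * e <= preact v p & `|th1 v| * e <= preact v q].
Proof.
have [xs xsab vxs] := exists_active_point.
have th1_1 : 0 < `|th1 v| + 1 by have := normr_ge0 (th1 v); lra.
set r := Num.min ((b - a) / 4) (preact v xs / (4 * (`|th1 v| + 1))).
have r0 : 0 < r by rewrite lt_min !divr_gt0 ?mulr_gt0 ?subr_gt0.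
have [rba ru] : r <= (b - a) / 4 /\ r <= preact v xs / (4 * (`|th1 v| + 1)).
  by rewrite !ge_min !lexx orbT.
have {}ru : 4 * (`|th1 v| + 1) * r <= preact v xs.
  by rewrite mulrC -ler_pdivlMr ?mulr_gt0.
have r4 : 2 * (2 * r) <= b - a by lra.
have r2 : 0 <= 2 * r by lra.
have [c [/andP[ac cb] cxs]] := exists_itv_near xsab r4 r2.
have robust z : `|z - c| <= r -> `|th1 v| * r <= preact v z.
  move=> zc; have : `|z - xs| <= 3 * r by have := ler_distD c z xs; lra.
  by move/(preact_dist v); rewrite ler_distl => /andP[? ?]; lra.
exists r => //; exists (c - r), (c + r); split; try lra; apply: robust.
  by rewrite (_ : _ - c = - r) ?normrN ?gtr0_norm //; ring.
by rewrite (_ : _ - c = r) ?gtr0_norm //; ring.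
Qed.

Lemma slope_cvg : (fun n => `|slope (theta n) - slope v|) @ \oo --> 0.
Proof.
have [e e0 [p [q [ap pq qb vp vq]]]] := exists_active_pair.
have ve : 0 < `|th1 v| * e by rewrite mulr_gt0 ?normr_gt0 ?th1_neq0.
have [pab qab] : p \in `[a, b] /\ q \in `[a, b].
  by rewrite !in_itv /=; split; apply/andP; split; lra.
apply/cvgrPdist_lt => eta eta0.
have dqp : 0 < eta * (q - p) / 4 by rewrite !mulr_gt0 ?subr_gt0.
move: (activity_agree_near e e0) (hu _ dqp); apply: filterS2 => n agree ht.
have [vp0 vq0] : 0 < preact v p /\ 0 < preact v q by split; lra.
have tp : 0 < preact (theta n) p.
  by apply/(agree p) => //; [lra | rewrite (gtr0_norm vp0)].
have tq : 0 < preact (theta n) q.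
  by apply/(agree q) => //; [lra | rewrite (gtr0_norm vq0)].
have E : (slope (theta n) - slope v) * (q - p) =
    (realization (theta n) q - h q) - (realization (theta n) p - h p).
  by rewrite mulrBl -!realizationB_active ?ltW // -!hv //; ring.
have := ler_normB (realization (theta n) q - h q) (realization (theta n) p - h p).
rewrite -E normrM (gtr0_norm (_ : 0 < q - p)) ?subr_gt0 // sub0r normrN normr_id => H.
have := ht p pab; have := ht q qab => hq hp.
rewrite -(ltr_pM2r (_ : 0 < q - p)) ?subr_gt0 //; lra.
Qed.

Lemma symdiff_measure_cvg0 :
  (fun n => lebesgue_measure (active_set a b (theta n) `+` active_set a b v))
    @ \oo --> 0%E.
Proof.
apply: cvge0_of_near_le => [n|e e0]; first exact: measure_ge0.
have e6 : 0 < e / 6 by rewrite divr_gt0.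
apply: filterS (activity_agree_near _ e6) => n agree.
rewrite (_ : e = (e / 6) *+ 6); last by rewrite -mulr_natr divfK.
have sub := active_set_symdiff_sub th1_neq0 agree.
apply: lebesgue_measure_le_three_balls _ (ltW e6) sub.
by apply: measurableU; apply: measurableD; exact: measurable_active_set.
Qed.

End convergence.

Theorem lemma6p4 (R : realType) (a b : R) (hab : a < b)
  (theta : nat -> param R) (h : R -> R)
  (hcont : {within `[a, b], continuous h})
  (hnc : exists x y, x \in `[a, b] /\ y \in `[a, b] /\ h x != h y)
  (hconv : (fun n => ereal_sup [set (`|realization (theta n) x - h x|)%:E
                                 | x in `[a, b]]) @ \oo --> 0%E) :
  exists v : param R,
    (forall x, x \in `[a, b] -> realization v x = h x) /\
    (fun n => `|th1 (theta n) * th3 (theta n) - th1 v * th3 v|) @ \oo --> (0 : R) /\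
    (fun n => lebesgue_measure (active_set a b (theta n) `+` active_set a b v))
      @ \oo --> 0%E.
Proof.
have hu := close_on_near_of_esup_cvg0 hconv.
have [v hv] : exists v : param R, forall x, x \in `[a, b] -> realization v x = h x.
  apply: exact_param_of_approx (within_continuous_eps_delta hcont) _ => d d0.
  by have [n hn] := filter_ex (hu d d0); exists (theta n).
exists v; split => //; split.
- exact: slope_cvg hab hv hu hnc.
- exact: symdiff_measure_cvg0 hab hv hu hnc.
Qed.
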